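(* Let $\mathcal{M}=(E,\rho)$ be a $q$-matroid, $E_1=\mathrm{cyc}(E)$, and $E_2\le E$ with $E_1\oplus E_2=E$. Let $\mathcal{M}_i=\mathcal{M}|_{E_i}$ for $i=1,2$. Then (a) $\mathcal{M}_2$ is the free $q$-matroid on $E_2$; (b) $\mathcal{Z}(\mathcal{M})=\mathcal{Z}(\mathcal{M}_1)$; (c) $\mathcal{M}=\mathcal{M}_1\oplus\mathcal{M}_2$.
   Context: Let $\mathbb{F}=\mathbb{F}_q$. A $q$-matroid is $\mathcal{M}=(E,\rho)$, $E$ a finite-dimensional $\mathbb{F}$-vector space, $\rho$ from subspaces to $\mathbb{Z}_{\ge0}$ with $0\le\rho(V)\le\dim V$, monotone and submodular. The restriction $\mathcal{M}|_X$ is $(X,\rho|_{\mathcal{L}(X)})$. Free $q$-matroid on $E_2$: $\rho(V)=\dim V$ for all $V\le E_2$. Flat: $\rho(F+\langle x\rangle)>\rho(F)$ for all $x\notin F$. Cyclic core: $\mathrm{cyc}(V)=\{x\in V\mid\rho(W)=\rho(V)\text{ for all }W\le V\text{ with }W+\langle x\rangle=V\}$; cyclic: $\mathrm{cyc}(V)=V$; $\mathcal{Z}(\mathcal{M})$: the set of cyclic flats. $\mathcal{M}=\mathcal{M}_1\oplus\mathcal{M}_2$ means $E=E_1\oplus E_2$ and $\rho(V)=\dim V+\min_{X\le V}(\rho_1(\pi_1(X))+\rho_2(\pi_2(X))-\dim X)$ for all $V$, where $\rho_i$ is the rank function of $\mathcal{M}_i$ and $\pi_i:E\to E_i$ the projections.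 *)

(* A q-matroid is modelled on a ground subspace X of an
   ambient finite-dimensional vector space L over a finite field F = F_q;
   the rank function is a map {vspace L} -> nat, only its values on
   subspaces of X matter. *)
From HB Require Import structures.
From mathcomp Require Import all_boot all_order all_algebra all_field.
Set Implicit Arguments. Unset Strict Implicit. Unset Printing Implicit Defensive.
Import Order.TTheory GRing.Theory Num.Theory.

Local Open Scope ring_scope.

Section QMatroid.
Variables (F : finFieldType) (L : vectType F).

Definition is_qmatroid (X : {vspace L}) (rho : {vspace L} -> nat) : Prop :=
  [/\ (forall V : {vspace L}, (V <= X)%VS -> (rho V <= \dim V)%N),
      (forall V W : {vspace L}, (V <= X)%VS -> (W <= X)%VS ->
          (V <= W)%VS -> (rho V <= rho W)%N) &
      (forall V W : {vspace L}, (V <= X)%VS -> (W <= X)%VS ->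
          (rho (V + W)%VS + rho (V :&: W)%VS <= rho V + rho W)%N)].

Definition in_cyc (rho : {vspace L} -> nat) (V : {vspace L}) (x : L) : Prop :=
  x \in V /\ forall W : {vspace L}, (W <= V)%VS -> (W + <[x]>)%VS = V -> rho W = rho V.

Definition cyclic (rho : {vspace L} -> nat) (V : {vspace L}) : Prop :=
  forall x, x \in V <-> in_cyc rho V x.

Definition flat (X : {vspace L}) (rho : {vspace L} -> nat) (V : {vspace L}) : Prop :=
  forall x, x \in X -> x \notin V -> (rho V < rho (V + <[x]>)%VS)%N.

Definition cyclic_flat (X : {vspace L}) (rho : {vspace L} -> nat) (V : {vspace L}) : Prop :=
  [/\ (V <= X)%VS, flat X rho V & cyclic rho V].

Definition free_qmatroid (X : {vspace L}) (rho : {vspace L} -> nat) : Prop :=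
  forall V : {vspace L}, (V <= X)%VS -> rho V = \dim V.

(* rho = rho1 (+) rho2 for E = E1 (+) E2 (E = fullv); pi_i = projections.
   The minimum in the formula is written out: it is attained and is a lower
   bound.  Computed in int. *)
Definition dsum_term (E1 E2 : {vspace L}) (rho1 rho2 : {vspace L} -> nat)
  (X : {vspace L}) : int :=
  (rho1 (daddv_pi E1 E2 @: X)%VS)%:Z + (rho2 (daddv_pi E2 E1 @: X)%VS)%:Z
  - (\dim X)%:Z.

Definition is_direct_sum (E1 E2 : {vspace L}) (rho rho1 rho2 : {vspace L} -> nat)
  : Prop :=
  forall V : {vspace L},
    (forall X : {vspace L}, (X <= V)%VS ->
       (rho V)%:Z <= (\dim V)%:Z + dsum_term E1 E2 rho1 rho2 X) /\
    (exists2 X : {vspace L}, (X <= V)%VS &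
       (rho V)%:Z = (\dim V)%:Z + dsum_term E1 E2 rho1 rho2 X).

End QMatroid.

From HB Require Import structures.
From mathcomp Require Import all_boot all_order all_algebra all_field.
From mathcomp Require Import zify.
From Stdlib Require Import Classical.
Import Order.TTheory GRing.Theory Num.Theory.
Local Open Scope ring_scope.
Set Implicit Arguments. Unset Strict Implicit.

(* The key fact is that E1 = cyc(E) has the same nullity as E.  Starting from
   A = E, as long as A strictly contains E1 pick x in A outside E1: since x is
   not in the cyclic core, some hyperplane W with W + <x> = E has smaller rank,
   and W contains E1 because every vector of E1 outside W would force
   rho W = rho E.  Submodularity on A and W shows that A :&: W, of codimension
   one in A, still has the nullity of E.  Submodularity again turns this into
   nullity(E1 :&: V) = nullity(V) for every V, which gives (a) for V <= E2, the
   minimiser X = E1 :&: V in (c), and flatness in E of the cyclic flats of E1.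
   Conversely a cyclic space V lies in cyc(E): for a hyperplane W of E missing
   x in V, (W :&: V) + <x> = V, so rho (W :&: V) = rho V and submodularity
   gives rho W = rho E. *)

Section LinesAndProjections.
Variables (K : fieldType) (vT : vectType K).
Implicit Types (U V W X : {vspace vT}) (x : vT).

Lemma dimv_add_line_le W x : (\dim (W + <[x]>) <= (\dim W).+1)%N.
Proof. by have := dimv_sum_cap W <[x]>; rewrite dim_vline; case: (x != 0); lia. Qed.

Lemma dimv_add_line_notin W x : x \notin W -> \dim (W + <[x]>) = (\dim W).+1.
Proof.
move=> xNW; apply/eqP; rewrite eqn_leq dimv_add_line_le /= ltn_neqAle.
rewrite dimvS ?addvSl // andbT; apply: contraNneq xNW => eq_dim.
have /eqP -> : W == (W + <[x]>)%VS by rewrite eqEdim addvSl -eq_dim /=.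
by rewrite memvE addvSr.
Qed.

Lemma add_line_eq U W x :
  (W <= U)%VS -> x \in U -> x \notin W -> (\dim U <= (\dim W).+1)%N ->
  (W + <[x]>)%VS = U.
Proof.
move=> WU xU xNW dimU; apply/eqP; rewrite eqEdim subv_add WU -memvE xU.
by rewrite dimv_add_line_notin.
Qed.

Lemma capv_add_line_notin U V x :
  (V <= U)%VS -> x \notin U -> (U :&: (V + <[x]>))%VS = V.
Proof.
move=> VU xNU; apply/eqP; rewrite eq_sym eqEdim subv_cap VU addvSl /=.
have := dimv_sum_cap U (V + <[x]>); rewrite dimv_add_line_notin; last first.
  by apply: contra xNU; apply: subvP.
have : (\dim (U + <[x]>) <= \dim (U + (V + <[x]>)))%N.
  by apply/dimvS/addvS; rewrite ?addvSr.
by rewrite dimv_add_line_notin //; lia.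
Qed.

Lemma daddv_pi_img_id U W X :
  (U :&: W = 0)%VS -> (X <= U)%VS -> (daddv_pi U W @: X)%VS = X.
Proof.
move=> dxUW XU; rewrite -[RHS]lim1g; apply: eq_in_limg => u /(subvP XU) uU.
by rewrite daddv_pi_id // lfunE.
Qed.

Lemma daddv_pi_img_compl U W X :
  (U :&: W = 0)%VS -> (X <= W)%VS -> (daddv_pi U W @: X)%VS = 0%VS.
Proof.
move=> dxUW XW; apply/eqP; rewrite -lkerE; apply/subvP => w /(subvP XW) wW.
have dxWU : (W :&: U = 0)%VS by rewrite capvC.
rewrite memv_ker; have := daddv_pi_add dxUW (memv_add (mem0v U) wW).
rewrite add0r (daddv_pi_id dxWU wW) => /(congr1 (fun z => z - w)).
by rewrite addrK subrr => ->.
Qed.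

Lemma subv_daddv_pi_img U W X :
  (U :&: W = 0)%VS -> (X <= U + W)%VS ->
  (X <= daddv_pi U W @: X + daddv_pi W U @: X)%VS.
Proof.
move=> dxUW XUW; apply/subvP => x xX.
rewrite -(daddv_pi_add dxUW (subvP XUW x xX)).
by apply: memv_add; apply: memv_img.
Qed.

End LinesAndProjections.

Section QMatroidRank.
Variables (F : finFieldType) (L : vectType F) (rho : {vspace L} -> nat).
Hypothesis rho_qm : is_qmatroid fullv rho.
Implicit Types (U V W X : {vspace L}) (x : L).

Lemma rank_le_dim U : (rho U <= \dim U)%N.
Proof. by case: rho_qm => le_dim _ _; apply/le_dim/subvf. Qed.

Lemma rank0 : rho 0%VS = 0%N.
Proof. by have := rank_le_dim 0%VS; rewrite dimv0; lia. Qed.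

Lemma rankS U V : (U <= V)%VS -> (rho U <= rho V)%N.
Proof. by case: rho_qm => _ mono _; apply: mono; apply: subvf. Qed.

Lemma rank_submod U V : (rho (U + V)%VS + rho (U :&: V)%VS <= rho U + rho V)%N.
Proof. by case: rho_qm => _ _ submod; apply: submod; apply: subvf. Qed.

Lemma rank_addv_le U V : (rho (U + V)%VS <= rho U + rho V)%N.
Proof. by have := rank_submod U V; lia. Qed.

Lemma nullityS U V : (U <= V)%VS -> (rho V + \dim U <= rho U + \dim V)%N.
Proof.
move=> UV; have defV : (V :\: U + U)%VS = V by rewrite addv_diff (addv_idPl UV).
have := rank_addv_le (V :\: U) U; rewrite defV.
have := rank_le_dim (V :\: U); have := dimv_cap_compl V U.
by rewrite (capv_idPr UV); lia.
Qed.

Lemma rank_le_dsum_term E1 E2 V X :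
  (E1 :&: E2 = 0)%VS -> (E1 + E2)%VS = fullv -> (X <= V)%VS ->
  (rho V)%:Z <= (\dim V)%:Z + dsum_term E1 E2 rho rho X.
Proof.
move=> dxE defE XV; rewrite /dsum_term.
have := rankS (subv_daddv_pi_img dxE (X := X) _); rewrite defE subvf => /(_ isT).
have := rank_addv_le (daddv_pi E1 E2 @: X) (daddv_pi E2 E1 @: X).
by have := nullityS XV; lia.
Qed.

Lemma notin_cyc_hyperplane U x :
  x \in U -> ~ in_cyc rho U x ->
  exists W, [/\ (W <= U)%VS, (W + <[x]>)%VS = U & (rho W < rho U)%N].
Proof.
move=> xU notcyc; apply: NNPP => noW; apply: notcyc; split=> // W WU defU.
apply/eqP/negPn/negP => neq; apply: noW; exists W; split=> //.
by rewrite ltn_neqAle neq rankS.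
Qed.

Lemma in_cyc_hyperplane U W x :
  in_cyc rho U x -> (W <= U)%VS -> x \notin W -> (\dim U <= (\dim W).+1)%N ->
  rho W = rho U.
Proof. by case=> xU cyc_x WU xNW dimU; apply: cyc_x => //; apply: add_line_eq. Qed.

Lemma cyclic_sub_in_cyc U V x :
  cyclic rho V -> (V <= U)%VS -> x \in V -> in_cyc rho U x.
Proof.
move=> cycV VU xV; split=> [|W WU defU]; first exact: subvP xV.
have [xW|xNW] := boolP (x \in W).
  by congr rho; rewrite -defU; apply/esym/addv_idPl; rewrite -memvE.
have dimU := dimv_add_line_le W x; rewrite defU in dimU.
have WV_U : (W + V)%VS = U.
  apply: subv_anti; rewrite subv_add WU VU -{1}defU.
  by apply: addvS; rewrite // -memvE.
have WxV : (W :&: V + <[x]>)%VS = V.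
  apply: add_line_eq; rewrite ?capvSr ?memv_cap ?(negbTE xNW) //.
  by have := dimv_sum_cap W V; rewrite WV_U; lia.
have rWV : rho (W :&: V)%VS = rho V by apply: ((cycV x).1 xV).2; rewrite ?capvSr.
by have := rank_submod W V; have := rankS WU; rewrite WV_U rWV; lia.
Qed.

Variable E1 : {vspace L}.
Hypothesis E1_cyc : forall x, x \in E1 <-> in_cyc rho fullv x.

Lemma cyc_core_hyperplane x :
  x \notin E1 ->
  exists W, [/\ (E1 <= W)%VS, x \notin W, (W + <[x]>)%VS = fullv &
                (rho W < rho fullv)%N].
Proof.
move=> xNE1; have [|W [_ defE ltW]] := notin_cyc_hyperplane (memvf x).
  by move/E1_cyc; apply/negP.
have dimE := dimv_add_line_le W x; rewrite defE in dimE.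
have xNW : x \notin W.
  apply: contraTN ltW => xW; rewrite -defE (addv_idPl _) ?ltnn // -memvE.
exists W; split => //; apply/subvP => y yE1; apply: contraTT ltW => yNW.
by rewrite (in_cyc_hyperplane ((E1_cyc y).1 yE1) (subvf W) yNW dimE) ltnn.
Qed.

Lemma nullity_cyc_core_ge A :
  (E1 <= A)%VS -> (rho A + \dim (fullv : {vspace L}) <= rho fullv + \dim A)%N ->
  (rho E1 + \dim (fullv : {vspace L}) <= rho fullv + \dim E1)%N.
Proof.
have [n] := ubnP (\dim A); elim: n A => // n IH A ltAn E1A nullA.
have [AE1|/subvPn [x xA xNE1]] := boolP (A <= E1)%VS.
  by rewrite (@subv_anti _ _ E1 A) ?E1A.
have [W [E1W xNW defE ltW]] := cyc_core_hyperplane xNE1.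
have AW : (A + W)%VS = fullv.
  by apply/eqP; rewrite eqEsubv subvf -defE addvC addvS // -memvE.
have := dimv_sum_cap A W; have := rank_submod A W; rewrite AW.
have := dimv_add_line_notin xNW; rewrite defE => dimE dimAW rAW.
apply: (IH (A :&: W)%VS); rewrite ?subv_cap ?E1A //; lia.
Qed.

Lemma nullity_cyc_core :
  (rho fullv + \dim E1 = rho E1 + \dim (fullv : {vspace L}))%N.
Proof.
apply/eqP; rewrite eqn_leq nullityS ?subvf //=.
by apply: (nullity_cyc_core_ge (subvf E1)).
Qed.

Lemma nullity_capv_cyc_core V :
  (rho V + \dim (E1 :&: V) = rho (E1 :&: V)%VS + \dim V)%N.
Proof.
apply/eqP; rewrite eqn_leq nullityS ?capvSr //=.
have := nullityS (subvf (E1 + V)); have := rank_submod E1 V.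
by have := dimv_sum_cap E1 V; have := nullity_cyc_core; lia.
Qed.

Lemma free_compl_cyc_core E2 : (E1 :&: E2 = 0)%VS -> free_qmatroid E2 rho.
Proof.
move=> dxE V VE2; have E1V0 : (E1 :&: V = 0)%VS.
  by apply/eqP; rewrite -subv0 -dxE capvS.
by have := nullity_capv_cyc_core V; rewrite E1V0 rank0 dimv0; lia.
Qed.

Lemma cyclic_flat_cyc_core V : cyclic_flat fullv rho V <-> cyclic_flat E1 rho V.
Proof.
split=> [[_ flatV cycV] | [VE1 flatV cycV]]; split=> //.
- by apply/subvP => x xV; apply/E1_cyc; apply: cyclic_sub_in_cyc (subvf V) xV.
- by move=> x _; apply: flatV; apply: memvf.
- exact: subvf.
move=> x _ xNV; have [xE1|xNE1] := boolP (x \in E1); first exact: flatV.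
have := nullity_capv_cyc_core (V + <[x]>); rewrite capv_add_line_notin //.
by rewrite dimv_add_line_notin //; lia.
Qed.

Lemma dsum_term_cyc_core E2 V :
  (E1 :&: E2 = 0)%VS ->
  (rho V)%:Z = (\dim V)%:Z + dsum_term E1 E2 rho rho (E1 :&: V).
Proof.
move=> dxE; have dxE21 : (E2 :&: E1 = 0)%VS by rewrite capvC.
rewrite /dsum_term daddv_pi_img_id ?daddv_pi_img_compl ?capvSl // rank0.
by have := nullity_capv_cyc_core V; lia.
Qed.

Lemma dsum_cyc_core E2 :
  (E1 :&: E2 = 0)%VS -> (E1 + E2)%VS = fullv -> is_direct_sum E1 E2 rho rho rho.
Proof.
move=> dxE defE V; split=> [X|]; first exact: rank_le_dsum_term.
by exists (E1 :&: V)%VS; [exact: capvSr | exact: dsum_term_cyc_core].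
Qed.

End QMatroidRank.

Theorem proposition7p5 (F : finFieldType) (L : vectType F)
  (rho : {vspace L} -> nat) (E1 E2 : {vspace L}) :
  is_qmatroid fullv rho ->
  (forall x : L, x \in E1 <-> in_cyc rho fullv x) ->
  directv (E1 + E2) -> (E1 + E2)%VS = fullv ->
  [/\ free_qmatroid E2 rho,
      (forall V : {vspace L}, cyclic_flat fullv rho V <-> cyclic_flat E1 rho V) &
      is_direct_sum E1 E2 rho rho rho].
Proof.
move=> rho_qm E1_cyc /directv_addP dxE defE; split.
- exact (free_compl_cyc_core rho_qm E1_cyc dxE).
- exact (cyclic_flat_cyc_core rho_qm E1_cyc).
- exact (dsum_cyc_core rho_qm E1_cyc dxE defE).
Qed.
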